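(* Let $G_n$, $m$, $g$ and $\alpha$ be as in the context. Let $(u,v)$ be an arc of $G_n$ with $u\neq m$ and $v\neq m$, and let $l(uv)$ denote its label. Then $l(uv)\leq \alpha(u)$. Moreover, if $l(uv)<\alpha(u)$ then $g(v)=\varepsilon$, and if $l(uv)=\alpha(u)$ then $g(v)=g(u)\,l(uv)$.
   Context: Let $A$ be a finite alphabet with a linear order $<$, extended to the lexicographic order on words: $x<y$ if $x$ is a proper prefix of $y$, or $x=uav$, $y=ubw$ with $a,b\in A$, $a<b$. Let $\mathcal{F}$ be a set of words over $A$ (forbidden words). A word $w$ is in the language if the bi-infinite periodic sequence $\cdots www\cdots$ contains no element of $\mathcal{F}$ as a factor; $W_k$ denotes the set of words of length $k$ in the language. Fix $n\geq 1$ and consider the digraph with vertex set $A^n$ and arcs $(as,sb)$ for $a,b\in A$, $s\in A^{n-1}$, $asb\in W_{n+1}$, the label of $(as,sb)$ being $b$. The de Bruijn graph of span $n$, $G_n$, is a strongly connected component of maximum size of this digraph; vertices are identified with their words. Let $m=m_1\cdots m_n$ be the vertex of $G_n$ whose word is lexicographically largest. For a vertex $u\neq m$, $g(u)$ is the longest word which is both a prefix of $m$ and a suffix of $u$ (possibly the empty word $\varepsilon$; necessarily $|g(u)|<n$), and $\alpha(u)=m_{|g(u)|+1}$. *)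

From HB Require Import structures.
From mathcomp Require Import all_boot all_order.
From Stdlib Require Import Relations.
Set Implicit Arguments. Unset Strict Implicit. Unset Printing Implicit Defensive.
Import Order.TTheory.
Local Open Scope order_scope.

Section DeBruijn.
Context {d : Order.disp_t} {T : finOrderType d}.

Fixpoint lexlt (x y : seq T) : bool :=
  match x, y with
  | [::], _ :: _ => true
  | _, [::] => false
  | a :: x', b :: y' => (a < b) || ((a == b) && lexlt x' y')
  end.

(* f is a factor of the bi-infinite periodic sequence ... w w w ...
   (for w empty this sequence is empty; only the empty word is a factor). *)
Definition occurs_periodic (f w : seq T) : Prop :=
  if w is a :: _ then
    exists i : nat, forall j, (j < size f)%N ->
      nth a f j = nth a w ((i + j) %% size w)
  else f = [::].

Definition inL (F : seq T -> Prop) (w : seq T) : Prop :=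
  forall f, F f -> ~ occurs_periodic f w.

(* (x, y) is an arc with label b of the digraph on A^n:
   x = a s, y = s b, and a s b in W_{n+1}. *)
Definition arcL (F : seq T -> Prop) (n : nat) (x y : n.-tuple T) (b : T) : Prop :=
  exists (a : T) (s : seq T),
    val x = a :: s /\ val y = rcons s b /\ inL F (a :: rcons s b).

Definition arc (F : seq T -> Prop) (n : nat) (x y : n.-tuple T) : Prop :=
  exists b, arcL F x y b.

Definition reach (F : seq T -> Prop) (n : nat) : relation (n.-tuple T) :=
  clos_refl_trans (n.-tuple T) (@arc F n).

Definition is_scc (F : seq T -> Prop) (n : nat) (C : {set n.-tuple T}) : Prop :=
  exists x, forall y, y \in C <-> (reach F x y /\ reach F y x).

Definition is_Gn (F : seq T -> Prop) (n : nat) (C : {set n.-tuple T}) : Prop :=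
  is_scc F C /\ forall C' : {set n.-tuple T}, is_scc F C' -> (#|C'| <= #|C|)%N.

Definition gfun (m u : seq T) : seq T :=
  take (\max_(k < (size m).+1 | suffix (take k m) u) (k : nat))%N m.

(* alpha(u) = m_{|g(u)|+1}, i.e. the letter of m at 0-based index |g(u)|;
   x0 is an irrelevant default (the index is in range when u <> m). *)
Definition alpha (x0 : T) (m u : seq T) : T := nth x0 m (size (gfun m u)).

End DeBruijn.

(* Since G_n is strongly connected and has a vertex u <> m, every vertex has an
   out-arc inside G_n.  So every suffix of a vertex of G_n can be extended, by
   walking along arcs inside G_n, to a vertex of G_n, which is at most m in the
   lexicographic order.  Hence whenever a suffix of a vertex (or of m
   itself) starts with a prefix m_1 ... m_j of m followed by a letter c, we get
   c <= m_{j+1}.  Applied to the suffix g(u) b of v this gives b <= alpha(u).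
   An arc u -> v with label b shifts borders: if m_1 ... m_{k+1} is a suffix of
   v then m_{k+1} = b and m_1 ... m_k is a suffix of u, so |g(v)| <= |g(u)| + 1.
   If b < alpha(u) and g(v) = m_1 ... m_{L+1} with L < |g(u)|, then m_1 ... m_L
   is a border of g(u), so a suffix of m reads m_1 ... m_L alpha(u), forcing
   alpha(u) <= m_{L+1} = b. *)
From mathcomp Require Import all_boot all_order.
From Stdlib Require Import Relations.
From mathcomp Require Import zify.
Set Implicit Arguments. Unset Strict Implicit. Unset Printing Implicit Defensive.
Import Order.TTheory.
Local Open Scope order_scope.

Section Suffixes.
Variable T : eqType.
Implicit Types s w x : seq T.

Lemma suffix_of_suffixes x s w : suffix x w -> suffix s w ->
  (size x <= size s)%N -> suffix x s.
Proof.
rewrite !suffixE => /eqP ex /eqP es.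
have le_sw : (size s <= size w)%N by rewrite -es size_drop leq_subr.
move: le_sw; set i := size x; set k := size s => le_kw le_ik.
rewrite -ex -es drop_drop; apply/eqP; congr drop; lia.
Qed.

Lemma suffix_behead a x s : suffix x (a :: s) -> (size x <= size s)%N ->
  suffix x s.
Proof.
case/suffixP=> -[|c w] /= e; last by case: e => _ -> _; exact: suffix_suffix.
by rewrite -e /= ltnn.
Qed.

Lemma suffix_take_rcons (x0 : T) m s b k : (k < size m)%N ->
  suffix (take k.+1 m) (rcons s b) = (nth x0 m k == b) && suffix (take k m) s.
Proof. by move=> lt_km; rewrite (take_nth x0) // suffix_rcons. Qed.

Lemma drop_border (x0 : T) m L K : (K < size m)%N ->
  suffix (take L m) (take K m) ->
  drop (K - L) m = rcons (take L m) (nth x0 m K) ++ drop K.+1 m.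
Proof.
move=> lt_Km /suffixP[w eK].
have le_Km : (K <= size m)%N by exact: ltnW.
have le_LK : (L <= K)%N.
  by have := size_takel le_Km; rewrite eK size_cat size_take_min; lia.
have size_w : size w = K - L.
  have := size_takel le_Km; rewrite eK size_cat size_takel //; first lia.
  exact: leq_trans le_LK le_Km.
rewrite -{1}(cat_take_drop K m) eK -catA -size_w drop_size_cat //.
by rewrite (drop_nth x0) // cat_rcons.
Qed.

End Suffixes.

Section Words.
Context {d : Order.disp_t} {T : finOrderType d}.
Implicit Types m w : seq T.

Lemma gfun_take m w : gfun m w = take (size (gfun m w)) m.
Proof. by rewrite {2}/gfun size_take_min take_min take_size. Qed.

Lemma size_gfun m w : (size (gfun m w) <= size m)%N.
Proof. by rewrite size_take_min geq_minr. Qed.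

Lemma suffix_gfun m w : suffix (gfun m w) w.
Proof.
have suffix_nil : suffix (take (@ord0 (size m)) m) w by rewrite take0 suffix0s.
rewrite /gfun (bigop.bigmax_eq_arg ord0 suffix_nil).
by case: arg_maxnP.
Qed.

Lemma gfun_max m w k : (k <= size m)%N -> suffix (take k m) w ->
  (k <= size (gfun m w))%N.
Proof.
move=> le_km sk; rewrite size_take_min leq_min le_km andbT.
exact: (leq_bigmax_cond (Ordinal (le_km : (k < (size m).+1)%N))).
Qed.

Lemma size_gfun_lt m w : size w = size m -> w != m ->
  (size (gfun m w) < size m)%N.
Proof.
move=> size_wm; apply: contraNT; rewrite -leqNgt => le_mg.
have gm : gfun m w = m.
  have size_gm : size (gfun m w) = size m by apply/eqP; rewrite eqn_leq size_gfun.
  by rewrite gfun_take size_gm take_size.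
have := suffix_gfun m w; rewrite gm suffixE size_wm subnn drop0.
by rewrite eq_sym.
Qed.

Lemma lexlt_take_rcons (x0 : T) m j c r : (j < size m)%N ->
  lexlt (rcons (take j m) c ++ r) m -> c <= nth x0 m j.
Proof.
elim: j m => [|j IH] [|a m] //= lt_jm.
  by case/orP => [/ltW //| /andP[/eqP -> _]].
by rewrite ltxx eqxx; exact: IH.
Qed.

End Words.

Section ArcBorders.
Context {d : Order.disp_t} {T : finOrderType d}.
Variables (F : seq T -> Prop) (n : nat) (m u v : n.-tuple T) (b : T).
Hypotheses (u_neq_m : u != m) (arc_uv : arcL F u v b).

Lemma size_gfun_lt_tuple : (size (gfun m u) < n)%N.
Proof. by have := @size_gfun_lt _ _ m u; rewrite !size_tuple val_eqE; apply. Qed.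

Lemma rcons_gfun_alpha (x0 : T) :
  rcons (gfun m u) (alpha x0 m u) = take (size (gfun m u)).+1 m.
Proof.
rewrite (take_nth x0) -?gfun_take // size_tuple; exact: size_gfun_lt_tuple.
Qed.

Lemma suffix_gfun_label : suffix (rcons (gfun m u) b) v.
Proof.
have [a [s [eu [-> _]]]] := arc_uv; rewrite suffix_rcons eqxx /=.
apply: (@suffix_behead _ a); first by rewrite -eu suffix_gfun.
have size_s : size (a :: s) = n by rewrite -eu; exact: size_tuple.
rewrite -ltnS -[(size s).+1]/(size (a :: s)) size_s.
exact: size_gfun_lt_tuple.
Qed.

Lemma gfun_arc_step (x0 : T) L : size (gfun m v) = L.+1 ->
  nth x0 m L = b /\ suffix (take L m) u.
Proof.
have [a [s [eu [ev _]]]] := arc_uv; move=> size_gv.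
have lt_Lm : (L < size m)%N by rewrite -size_gv size_gfun.
have := suffix_gfun m v; rewrite gfun_take size_gv ev (suffix_take_rcons x0) //.
case/andP=> /eqP -> suffix_s; split=> //; rewrite eu.
exact: suffix_trans suffix_s (suffix_cons _ _).
Qed.

Lemma gfun_arc_eq (x0 : T) : b = alpha x0 m u -> gfun m v = rcons (gfun m u) b.
Proof.
move=> eb; rewrite eb (rcons_gfun_alpha x0) gfun_take; congr take.
have ge_gv : ((size (gfun m u)).+1 <= size (gfun m v))%N.
  apply: gfun_max; last by rewrite -(rcons_gfun_alpha x0) -eb suffix_gfun_label.
  by rewrite size_tuple size_gfun_lt_tuple.
case E: (size (gfun m v)) ge_gv => [//|L] ge_gv; congr S.
have [_ suffix_L] := gfun_arc_step x0 E.
rewrite ltnS in ge_gv; apply/eqP; rewrite eqn_leq ge_gv andbT.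
by apply: gfun_max suffix_L; rewrite ltnW // -E size_gfun.
Qed.

End ArcBorders.

Section LexMaxVertex.
Context {d : Order.disp_t} {T : finOrderType d}.
Variables (F : seq T -> Prop) (n : nat) (C : {set n.-tuple T}) (m : n.-tuple T).
Hypotheses (C_scc : is_scc F C) (m_in_C : m \in C).
Hypothesis m_lexmax : forall w, w \in C -> w != m -> lexlt (val w) (val m).
Variable u : n.-tuple T.
Hypotheses (u_in_C : u \in C) (u_neq_m : u != m).

Lemma scc_arc_out_neq x z : x \in C -> z \in C -> x != z ->
  exists x' b, x' \in C /\ arcL F x x' b.
Proof.
case: C_scc => r C_r xC zC neq_xz.
have [r_x x_r] := (C_r x).1 xC; have [r_z z_r] := (C_r z).1 zC.
have x_z : reach F x z by apply: rt_trans x_r r_z.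
move: neq_xz z_r; case: (clos_rt_rt1n _ _ _ _ x_z) => [|x' z' [b arc_xx'] x'_z].
  by rewrite eqxx.
move=> _ z_r.
exists x', b; split => //; apply/C_r; split.
  by apply: rt_trans r_x (rt_step _ _ _ _ _); exists b.
by apply: rt_trans (clos_rt1n_rt _ _ _ _ x'_z) z_r.
Qed.

Lemma scc_arc_out x : x \in C -> exists x' b, x' \in C /\ arcL F x x' b.
Proof.
move=> xC; have [-> | neq_xm] := eqVneq x m.
  by apply: scc_arc_out_neq m_in_C u_in_C _; rewrite eq_sym.
exact: scc_arc_out_neq xC m_in_C neq_xm.
Qed.

Lemma scc_extend_drop p x : x \in C ->
  exists z r, z \in C /\ z = drop p x ++ r :> seq T.
Proof.
move=> xC; elim: p => [|p [z [r [zC ez]]]].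
  by exists x, [::]; rewrite drop0 cats0.
have [z' [b [z'C [a [s [ez_as [ez' _]]]]]]] := scc_arc_out zC.
exists z'; rewrite -addn1 addnC -drop_drop.
case: (drop p x) ez => [|c t] ez /=; first by exists (tval z').
exists (rcons r b); split => //; rewrite ez'.
by move: ez; rewrite ez_as => -[_ ->]; rewrite drop0 rcons_cat.
Qed.

Lemma letter_le_lexmax (x0 : T) x p j c r : x \in C -> (j < n)%N ->
  drop p x = rcons (take j m) c ++ r -> c <= nth x0 m j.
Proof.
move=> xC lt_jn e.
have [z [r' [zC ez]]] := scc_extend_drop p xC.
rewrite e -catA in ez.
have size_m : size m = n by rewrite size_tuple.
have [zm | neq_zm] := eqVneq z m.
  have le_jm : (j <= size m)%N by rewrite size_m ltnW.
  move: ez; rewrite zm => ->.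
  by rewrite nth_cat size_rcons size_takel // ltnSn nth_rcons size_takel // ltnn eqxx.
apply: (lexlt_take_rcons x0 (r := r ++ r')); first by rewrite size_m.
by rewrite -ez; apply: m_lexmax.
Qed.

Variables (v : n.-tuple T) (b : T).
Hypotheses (v_in_C : v \in C) (arc_uv : arcL F u v b).

Lemma label_le_alpha (x0 : T) : b <= alpha x0 m u.
Proof.
have /suffixP[w ev] := suffix_gfun_label u_neq_m arc_uv.
have e : drop (size w) v = rcons (take (size (gfun m u)) m) b ++ [::].
  by rewrite ev drop_size_cat // cats0 -gfun_take.
exact: (letter_le_lexmax x0 v_in_C (size_gfun_lt_tuple u_neq_m) e).
Qed.

Lemma gfun_arc_lt (x0 : T) : b < alpha x0 m u -> gfun m v = [::].
Proof.
rewrite /alpha; set K := size (gfun m u) => lt_b.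
apply/eqP; rewrite -size_eq0; case E: (size (gfun m v)) => [//|L].
have [nth_L suffix_L] := gfun_arc_step arc_uv x0 E.
have lt_Km : (K < size m)%N by rewrite size_tuple (size_gfun_lt_tuple u_neq_m).
have le_LK : (L <= K)%N by apply: gfun_max; rewrite // ltnW // -E size_gfun.
case: (ltngtP L K) le_LK => [lt_LK | // | eq_LK] _; last first.
  by rewrite -eq_LK nth_L ltxx in lt_b.
have border : suffix (take L m) (take K m).
  apply: (suffix_of_suffixes suffix_L); first by rewrite -gfun_take suffix_gfun.
  have le_Km := ltnW lt_Km.
  by rewrite !size_takel // (leq_trans (ltnW lt_LK)).
have := letter_le_lexmax x0 m_in_C (ltn_trans lt_LK (size_gfun_lt_tuple u_neq_m))
  (drop_border x0 lt_Km border).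
by rewrite nth_L leNgt lt_b.
Qed.

End LexMaxVertex.

Theorem lemma3 (d : Order.disp_t) (T : finOrderType d) (F : seq T -> Prop)
  (n : nat) (C : {set n.-tuple T}) (m : n.-tuple T) (x0 : T)
  (u v : n.-tuple T) (b : T) :
  (1 <= n)%N ->
  is_Gn F C ->
  m \in C ->
  (forall w, w \in C -> w != m -> lexlt (val w) (val m)) ->
  u \in C -> v \in C -> arcL F u v b ->
  u != m -> v != m ->
  [/\ b <= alpha x0 m u,
      b < alpha x0 m u -> gfun m v = [::]
    & b = alpha x0 m u -> gfun m v = rcons (gfun m u) b].
Proof.
move=> _ [C_scc _] m_in_C m_lexmax u_in_C v_in_C arc_uv u_neq_m _.
split.
- exact: (label_le_alpha C_scc m_in_C m_lexmax u_in_C u_neq_m v_in_C arc_uv x0).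
- exact: (gfun_arc_lt C_scc m_in_C m_lexmax u_in_C u_neq_m arc_uv).
- exact: (gfun_arc_eq u_neq_m arc_uv).
Qed.
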